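(* For any NOI-graph or COI-graph $G$ on $n$ vertices there exists a vector $\mathbf{v}\in\{-1,1\}^n$ in the kernel of the hybrid Laplacian $\mathcal{L}(G)$.
   Context: A hybrid graph $G=(V,E_L+E_Q)$ has a set $E_L$ of $L$-edges and a set $E_Q$ of $Q$-edges. Its hybrid Laplacian is $\mathcal{L}(G)=L(S_l)+Q(S_q)$ with $S_l=(V,E_L)$, $S_q=(V,E_Q)$, $L=D-A$ the signed Laplacian and $Q=D+A$ the signless Laplacian. $G$ is a NOI-graph if $S_q$ is bipartite and no vertex is incident to both a $Q$-edge and an $L$-edge. $G$ is a COI-graph if $S_q$ is bipartite with a bipartition $(P_1,P_2)$ of $V$ (every $Q$-edge joining $P_1$ to $P_2$) such that every $L$-edge joins two vertices in the same part. *)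

From HB Require Import structures.
From mathcomp Require Import all_boot all_order all_algebra.
Set Implicit Arguments. Unset Strict Implicit. Unset Printing Implicit Defensive.
Import Order.TTheory GRing.Theory Num.Theory.
Local Open Scope ring_scope.

Definition simple_edges (n : nat) (E : rel 'I_n) : Prop :=
  (forall i j, E i j = E j i) /\ (forall i, ~~ E i i).

Definition adjmx (R : nzRingType) (n : nat) (E : rel 'I_n) : 'M[R]_n :=
  \matrix_(i, j) (E i j)%:R.

Definition degmx (R : nzRingType) (n : nat) (E : rel 'I_n) : 'M[R]_n :=
  diag_mx (\row_i (#|[pred k | E i k]|)%:R).

Definition laplacian (R : nzRingType) (n : nat) (E : rel 'I_n) : 'M[R]_n :=
  degmx R E - adjmx R E.
Definition signless_laplacian (R : nzRingType) (n : nat) (E : rel 'I_n) : 'M[R]_n :=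
  degmx R E + adjmx R E.

Definition hybrid_laplacian (R : nzRingType) (n : nat) (EL EQ : rel 'I_n) : 'M[R]_n :=
  laplacian R EL + signless_laplacian R EQ.

Definition bipartite (n : nat) (E : rel 'I_n) : Prop :=
  exists P : {set 'I_n}, forall i j, E i j -> (i \in P) != (j \in P).

Definition NOI_graph (n : nat) (EL EQ : rel 'I_n) : Prop :=
  bipartite EQ /\
  forall v : 'I_n, ~ ((exists u, EQ v u) /\ (exists w, EL v w)).

Definition COI_graph (n : nat) (EL EQ : rel 'I_n) : Prop :=
  exists P : {set 'I_n},
    (forall i j, EQ i j -> (i \in P) != (j \in P)) /\
    (forall i j, EL i j -> (i \in P) = (j \in P)).

(* Both classes admit a bipartition of the vertices that every Q-edge crosses
   and no L-edge crosses (for a NOI-graph, shrink a bipartition of S_q to the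
   vertices carrying Q-edges). The +-1 indicator vector v of such a
   bipartition is in the kernel: row i of L(S_l) v + Q(S_q) v is the sum of
   v_i - v_j over L-edges ij and of v_i + v_j over Q-edges ij, all zero. *)
From HB Require Import structures.
From mathcomp Require Import all_boot all_order all_algebra.
Import Order.TTheory GRing.Theory Num.Theory.
Local Open Scope ring_scope.

Section LaplacianAction.

Variables (R : nzRingType) (n m : nat) (E : rel 'I_n).

Lemma degmx_mul (v : 'M[R]_(n, m)) i k :
  (degmx R E *m v) i k = \sum_j (E i j)%:R * v i k.
Proof.
rewrite mul_diag_mx !mxE -[#|_|]sum1_card natr_sum mulr_suml big_mkcond /=.
by apply: eq_bigr => j _; rewrite inE; case: (E i j); rewrite ?mul0r ?mul1r.
Qed.

Lemma adjmx_mul (v : 'M[R]_(n, m)) i k :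
  (adjmx R E *m v) i k = \sum_j (E i j)%:R * v j k.
Proof. by rewrite mxE; apply: eq_bigr => j _; rewrite mxE. Qed.

Lemma laplacian_mul (v : 'M[R]_(n, m)) i k :
  (laplacian R E *m v) i k = \sum_j (E i j)%:R * (v i k - v j k).
Proof.
rewrite mulmxBl mxE [(- _ : 'M_(n, m)) i k]mxE degmx_mul adjmx_mul -sumrB.
by apply: eq_bigr => j _; rewrite mulrBr.
Qed.

Lemma signless_laplacian_mul (v : 'M[R]_(n, m)) i k :
  (signless_laplacian R E *m v) i k = \sum_j (E i j)%:R * (v i k + v j k).
Proof.
rewrite mulmxDl mxE degmx_mul adjmx_mul -big_split.
by apply: eq_bigr => j _; rewrite mulrDr.
Qed.

End LaplacianAction.

Definition sign_cv (R : nzRingType) {n : nat} (P : {set 'I_n}) : 'cV[R]_n :=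
  \col_i (if i \in P then 1 else -1).

Lemma hybrid_laplacian_sign_cv (R : nzRingType) (n : nat) (EL EQ : rel 'I_n)
    (P : {set 'I_n}) :
  (forall i j, EQ i j -> (i \in P) != (j \in P)) ->
  (forall i j, EL i j -> (i \in P) = (j \in P)) ->
  hybrid_laplacian R EL EQ *m sign_cv R P = 0.
Proof.
move=> EQ_cross EL_within; apply/matrixP => i k.
rewrite mulmxDl mxE laplacian_mul signless_laplacian_mul [RHS]mxE.
rewrite !big1 ?addr0 // => j _; rewrite !mxE.
- case EQij: (EQ i j); last by rewrite mul0r.
  have := EQ_cross _ _ EQij.
  by case: (i \in P); case: (j \in P) => // _; rewrite ?addrN ?addNr mulr0.
- case ELij: (EL i j); last by rewrite mul0r.
  by rewrite (EL_within _ _ ELij) subrr mulr0.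
Qed.

Lemma NOI_graph_COI {n : nat} {EL EQ : rel 'I_n} :
  simple_edges EL -> simple_edges EQ -> NOI_graph EL EQ -> COI_graph EL EQ.
Proof.
move=> [ELsym _] [EQsym _] [[P EQ_cross] not_both].
pose hasQ i := [exists u, EQ i u].
have hasQ_L i j : EL i j -> hasQ i = false.
  move=> ELij; apply/negbTE/existsP => -[u EQiu].
  by apply: (not_both i); split; [exists u | exists j].
exists [set i in P | hasQ i]; split => i j e; rewrite !inE.
- have [hi hj] : hasQ i /\ hasQ j.
    by split; apply/existsP; [exists j | exists i; rewrite EQsym].
  by rewrite hi hj !andbT EQ_cross.
- have e' : EL j i by rewrite ELsym.
  by rewrite (hasQ_L _ _ e) (hasQ_L _ _ e') !andbF.
Qed.

Theorem lemmaD2 (R : numDomainType) (n : nat) (EL EQ : rel 'I_n) :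
  simple_edges EL -> simple_edges EQ ->
  NOI_graph EL EQ \/ COI_graph EL EQ ->
  exists v : 'cV[R]_n,
    (forall i, v i 0 = 1 \/ v i 0 = -1) /\
    hybrid_laplacian R EL EQ *m v = 0.
Proof.
move=> ELs EQs graphG.
have [P [EQ_cross EL_within]] : COI_graph EL EQ.
  by case: graphG => [/(NOI_graph_COI ELs EQs)|].
exists (sign_cv R P); split; last exact: hybrid_laplacian_sign_cv.
by move=> i; rewrite mxE; case: (i \in P); [left | right].
Qed.
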